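(* Let $g\in G\setminus\{0\}$, $e\in E_N$, and $\sigma\in\Sigma_{E_N}$ be such that $(d\sigma)_p-\sigma_e=g$ for all $p\in\hat\partial e$, and assume $\partial\hat\partial\partial\hat\partial e\subseteq E_N$. Then either $|(\mathrm{supp}\,\sigma)^+|\ge7$, or $|(\mathrm{supp}\,\sigma)^+|=6$ and $|(\mathrm{supp}\,d\sigma)^+|\ge12$.
   Context: Work on $\mathbb Z^4$; oriented edges come in pairs $e,-e$; $dx_j=(x,x+\mathbf e_j)$ positively oriented. For $p=dx_{j_1}\wedge dx_{j_2}$ ($j_1<j_2$), $\partial p=\{dx_{j_1},d(x+\mathbf e_{j_1})_{j_2},-d(x+\mathbf e_{j_2})_{j_1},-dx_{j_2}\}$, $\partial(-p)=-\partial p$ (positive plaquettes are the $dx_{j_1}\wedge dx_{j_2}$). $\hat\partial e=\{p:e\in\partial p\}$; for sets $\partial A=\bigcup_{p\in A}\partial p$, $\hat\partial B=\bigcup_{e\in B}\hat\partial e$. $B_N=[-N,N]^4\cap\mathbb Z^4$; $E_N,P_N$ the oriented edges/plaquettes with all vertices in $B_N$. $G=\mathbb Z_n$. $\Sigma_{E_N}$: maps $\sigma:E_N\to G$ with $\sigma_{-e}=-\sigma_e$; $(d\sigma)_p=\sum_{e\in\partial p}\sigma_e$. $\mathrm{supp}$ denotes support and $(\cdot)^+$ the positively oriented elements. *)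

From mathcomp Require Import all_boot all_order all_algebra.
Set Implicit Arguments. Unset Strict Implicit. Unset Printing Implicit Defensive.
Import Order.TTheory GRing.Theory Num.Theory.
Local Open Scope ring_scope.

Definition vertex := {ffun 'I_4 -> int}.
Definition shift (x : vertex) (j : 'I_4) : vertex :=
  [ffun i => x i + (i == j)%:R].

(* oriented edge (x, j, s): s = true is dx_j = (x, x+e_j); s = false is -dx_j *)
Definition edge := (vertex * 'I_4 * bool)%type.
Definition eneg (e : edge) : edge := (e.1.1, e.1.2, ~~ e.2).
Definition epos (e : edge) : bool := e.2.

(* oriented plaquette (x, j1, j2, s), meaningful when j1 < j2;
   s = true is dx_{j1} /\ dx_{j2}, s = false its negative *)
Definition plaq := (vertex * 'I_4 * 'I_4 * bool)%type.
Definition pvalid (p : plaq) : bool := (p.1.1.2 < p.1.2)%N.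
Definition ppos (p : plaq) : bool := p.2.

Definition bd (p : plaq) : seq edge :=
  let: (x, j1, j2, s) := p in
  let l := [:: (x, j1, true); (shift x j1, j2, true);
               (shift x j2, j1, false); (x, j2, false)] in
  if s then l else map eneg l.

Definition in_hat (e : edge) (p : plaq) : bool := pvalid p && (e \in bd p).

Definition inB (N : nat) (x : vertex) : bool :=
  [forall i, (- (N%:Z) <= x i) && (x i <= N%:Z)].
Definition in_EN (N : nat) (e : edge) : bool :=
  inB N e.1.1 && inB N (shift e.1.1 e.1.2).
(* all vertices of p in B_N  (the vertices of p are the endpoints of its edges) *)
Definition in_PN (N : nat) (p : plaq) : bool := pvalid p && all (in_EN N) (bd p).

Definition bhbh_sub (N : nat) (e : edge) : Prop :=
  forall (p1 : plaq) (e1 : edge) (p2 : plaq) (e2 : edge),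
    in_hat e p1 -> e1 \in bd p1 -> in_hat e1 p2 -> e2 \in bd p2 -> in_EN N e2.

(* sigma in Sigma_{E_N}: given by its values on positive edges dx_j,
   extended antisymmetrically: sigma_{-e} = - sigma_e *)
Definition sig (n : nat) (sigma : vertex -> 'I_4 -> 'Z_n) (e : edge) : 'Z_n :=
  if e.2 then sigma e.1.1 e.1.2 else - sigma e.1.1 e.1.2.
Definition dsig (n : nat) (sigma : vertex -> 'I_4 -> 'Z_n) (p : plaq) : 'Z_n :=
  \sum_(e <- bd p) sig sigma e.

Definition boxv (N : nat) : seq vertex :=
  map (fun f : {ffun 'I_4 -> 'I_(N + N).+1} =>
         [ffun i => (nat_of_ord (f i))%:Z - N%:Z] : vertex)
      (enum {ffun 'I_4 -> 'I_(N + N).+1}).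
Definition posE (N : nat) : seq edge :=
  [seq e <- [seq (x, j, true) | x <- boxv N, j <- enum 'I_4] | in_EN N e].
Definition posP (N : nat) : seq plaq :=
  [seq p <- 
     flatten [seq [seq (x, j1, j2, true) | j1 <- enum 'I_4, j2 <- enum 'I_4] | x <- boxv N]
     | in_PN N p].

Definition card_supp_sigma (n N : nat) (sigma : vertex -> 'I_4 -> 'Z_n) : nat :=
  size (undup [seq e <- posE N | sig sigma e != 0]).
Definition card_supp_dsigma (n N : nat) (sigma : vertex -> 'I_4 -> 'Z_n) : nat :=
  size (undup [seq p <- posP N | dsig sigma p != 0]).

From Pilot Require Import Defs.
From mathcomp Require Import all_boot all_order all_algebra.
Set Implicit Arguments. Unset Strict Implicit. Unset Printing Implicit Defensive.
Import GRing.Theory Num.Theory.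
Local Open Scope ring_scope.

(* Each of the six plaquettes P of the star of e contains e exactly
   once, so (d sigma)_P - sigma_e = g <> 0 forces a second edge w(P) of dP with
   sigma_{w(P)} <> 0.  The finite geometry of Z^4 around e gives:
   (a) the "petals" (dP minus e, positively oriented) of the six plaquettes are
       pairwise disjoint and avoid e, so the w(P) are six distinct support edges;
   (b) every petal edge u lies in an "isolating" positive plaquette Q_u whose
       other edges avoid all petals, and the Q_u together with the positive
       versions of the star plaquettes are pairwise distinct.
   If the support of sigma consists of the six w(P) only, then sigma_e = 0, so
   d sigma = g <> 0 on the star, and (d sigma)_{Q_u} = +-sigma_u <> 0 for the six
   u = w(P): twelve plaquettes.  The hypothesis on d hat-d d hat-d e places all
   edges involved inside the box.
   Facts (a)-(b) are packaged as a boolean [certificate] defined for any vertex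
   type with shift maps; it is natural under injective maps commuting with the
   shifts, so it is checked by computation at the origin of the concrete model
   int^4 (finite functions do not reduce) and transported to every edge. *)

Lemma sum_single (V : zmodType) (T : eqType) (l : seq T) (p : pred T) (F : T -> V) a :
  a \in l -> p a -> count p l = 1%N -> {in l, forall f, ~~ p f -> F f = 0} ->
  \sum_(f <- l) F f = F a.
Proof.
move=> al pa once F0.
rewrite (bigID p) /= [X in _ + X]big1_seq ?addr0 => [|f /andP[npf fl]]; last exact: F0.
have : a \in [seq f <- l | p f] by rewrite mem_filter pa al.
rewrite -big_filter; move: (size_filter p l); rewrite once.
by case: [seq f <- l | p f] => [|b [|]] //= _; rewrite inE => /eqP ->; rewrite big_seq1.
Qed.

Lemma subseq_pick (T U : eqType) (F : T -> seq U) (h : T -> U) (s : seq T) :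
  {in s, forall x, h x \in F x} -> subseq (map h s) (flatten (map F s)).
Proof.
elim: s => //= x s IH hF; rewrite -cat1s; apply: cat_subseq.
  by rewrite sub1seq hF ?mem_head.
by apply: IH => y ys; apply: hF; rewrite inE ys orbT.
Qed.

Lemma size_undup_ge (T : eqType) (s L : seq T) :
  uniq s -> {subset s <= L} -> (size s <= size (undup L))%N.
Proof. by move=> s_uniq sL; apply: uniq_leq_size => // y /sL; rewrite mem_undup. Qed.

Lemma size_undup_le (T : eqType) (s L : seq T) :
  {subset L <= s} -> (size (undup L) <= size s)%N.
Proof.
by move=> Ls; apply: uniq_leq_size; rewrite ?undup_uniq // => y; rewrite mem_undup => /Ls.
Qed.

(* The four coordinate directions, as an explicitly computable list. *)
Definition dirs : seq 'I_4 :=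
  [:: @Ordinal 4 0 isT; @Ordinal 4 1 isT; @Ordinal 4 2 isT; @Ordinal 4 3 isT].

Lemma mem_dirs (j : 'I_4) : j \in dirs.
Proof. by case: j => [[|[|[|[|m]]]] Hm]. Qed.

(* Oriented edges and plaquettes over an arbitrary vertex type [V] with unit
   shifts [sh] and inverse shifts [ush]; for [V = vertex] and [sh = shift]
   these are exactly the notions of Defs. *)
Section LocalLattice.
Variables (V : eqType) (sh ush : V -> 'I_4 -> V).
Local Notation ledge := (V * 'I_4 * bool)%type.
Local Notation lplaq := (V * 'I_4 * 'I_4 * bool)%type.

Definition upos (f : ledge) : ledge := (f.1.1, f.1.2, true).
Definition flipE (f : ledge) : ledge := (f.1.1, f.1.2, ~~ f.2).
Definition ppos_of (p : lplaq) : lplaq := (p.1, true).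
Definition lvalid (p : lplaq) : bool := (p.1.1.2 < p.1.2)%N.

Definition lbd (p : lplaq) : seq ledge :=
  let: (x, j1, j2, s) := p in
  let l := [:: (x, j1, true); (sh x j1, j2, true);
               (sh x j2, j1, false); (x, j2, false)] in
  if s then l else map flipE l.

Definition lhat (t : ledge) (p : lplaq) : bool := lvalid p && (t \in lbd p).

(* Candidate plaquettes (both orientations) whose boundary may contain the
   line of [t]: the base point is that of [t] or shifted back along [k]. *)
Definition near (t : ledge) : seq lplaq :=
  flatten [seq let: (a, b) := if (t.1.2 < k)%N then (t.1.2, k) else (k, t.1.2) in
               [:: (t.1.1, a, b, true); (t.1.1, a, b, false);
                   (ush t.1.1 k, a, b, true); (ush t.1.1 k, a, b, false)]
          | k : 'I_4 <- dirs].

Definition star (t : ledge) : seq lplaq := [seq p <- near t | lhat t p].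

Definition others (t : ledge) (p : lplaq) : seq ledge :=
  [seq upos f | f <- lbd p & f != t].

Definition petals (t : ledge) : seq ledge := flatten [seq others t p | p <- star t].

Definition isolates (A : seq ledge) (u : ledge) (q : lplaq) : bool :=
  [&& lvalid q, q.2, count (fun f => upos f == u) (lbd q) == 1%N &
      all (fun f => (upos f == u) || (upos f \notin A)) (lbd q)].

Definition isolator (A : seq ledge) (u : ledge) : lplaq :=
  head (u.1.1, u.1.2, u.1.2, true) [seq q <- near u | isolates A u q].

Definition certificate (t : ledge) : bool :=
  let S := star t in let A := petals t in
  [&& size S == 6%N, all (fun p => count (pred1 t) (lbd p) == 1%N) S,
      uniq (upos t :: A), all (fun u => isolates A u (isolator A u)) A &
      uniq (map ppos_of S ++ map (isolator A) A)].

Lemma certificateP t :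
  certificate t ->
  [/\ size (star t) = 6%N,
      {in star t, forall p, count (pred1 t) (lbd p) = 1%N},
      uniq (upos t :: petals t),
      {in petals t, forall u, isolates (petals t) u (isolator (petals t) u)} &
      uniq (map ppos_of (star t) ++ map (isolator (petals t)) (petals t))].
Proof.
by case/and5P=> /eqP ? /allP once ? /allP ? ?; split=> // p /once /eqP.
Qed.

End LocalLattice.

Section Naturality.
Variables (V W : eqType) (shV ushV : V -> 'I_4 -> V) (shW ushW : W -> 'I_4 -> W).
Variable phi : V -> W.
Hypotheses (phi_inj : injective phi)
  (phi_sh : forall v j, phi (shV v j) = shW (phi v) j)
  (phi_ush : forall v j, phi (ushV v j) = ushW (phi v) j).

Definition map_edge (f : V * 'I_4 * bool) : W * 'I_4 * bool := (phi f.1.1, f.1.2, f.2).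
Definition map_plaq (p : V * 'I_4 * 'I_4 * bool) : W * 'I_4 * 'I_4 * bool :=
  (phi p.1.1.1, p.1.1.2, p.1.2, p.2).

Lemma map_edge_inj : injective map_edge.
Proof. by move=> [[x j] s] [[y k] r] [/phi_inj -> -> ->]. Qed.

Lemma map_plaq_inj : injective map_plaq.
Proof. by move=> [[[x j1] j2] s] [[[y k1] k2] r] [/phi_inj -> -> -> ->]. Qed.

Lemma map_edge_eq f f' : (map_edge f == map_edge f') = (f == f').
Proof. by apply/eqP/eqP => [/map_edge_inj | ->]. Qed.

Lemma upos_map_edge f : upos (map_edge f) = map_edge (upos f).
Proof. by []. Qed.

Lemma lbd_map p : lbd shW (map_plaq p) = map map_edge (lbd shV p).
Proof. by case: p => [[[x j1] j2] []]; rewrite /map_edge /= !phi_sh. Qed.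

Lemma lhat_map t p : lhat shW (map_edge t) (map_plaq p) = lhat shV t p.
Proof. by rewrite /lhat lbd_map (mem_map map_edge_inj). Qed.

Lemma near_map t : near ushW (map_edge t) = map map_plaq (near ushV t).
Proof.
rewrite /near map_flatten -map_comp; congr flatten; apply: eq_map => k /=.
by case: ifP => _; rewrite /map_plaq /= phi_ush.
Qed.

Lemma star_map t : star shW ushW (map_edge t) = map map_plaq (star shV ushV t).
Proof.
rewrite /star near_map filter_map; congr map.
by apply: eq_filter => p; exact: lhat_map.
Qed.

Lemma others_map t p :
  others shW (map_edge t) (map_plaq p) = map map_edge (others shV t p).
Proof.
rewrite /others lbd_map filter_map -!map_comp.
by congr map; apply: eq_filter => f /=; rewrite map_edge_eq.
Qed.

Lemma petals_map t : petals shW ushW (map_edge t) = map map_edge (petals shV ushV t).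
Proof.
rewrite /petals star_map map_flatten -!map_comp; congr flatten.
by apply: eq_map => p; exact: others_map.
Qed.

Lemma isolates_map A u q :
  isolates shW (map map_edge A) (map_edge u) (map_plaq q) = isolates shV A u q.
Proof.
rewrite /isolates lbd_map count_map all_map; congr [&& _, _, _ & _].
  by congr (_ == _); apply: eq_count => f /=; rewrite upos_map_edge map_edge_eq.
by apply: eq_all => f /=; rewrite upos_map_edge map_edge_eq (mem_map map_edge_inj).
Qed.

Lemma isolator_map A u :
  isolator shW ushW (map map_edge A) (map_edge u) = map_plaq (isolator shV ushV A u).
Proof.
rewrite /isolator near_map filter_map (eq_filter (isolates_map A u)).
by case: [seq q <- _ | _].
Qed.

Lemma certificate_map t : certificate shW ushW (map_edge t) = certificate shV ushV t.
Proof.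
rewrite /certificate star_map petals_map.
set S := star shV ushV t; set A := petals shV ushV t.
have -> : map (isolator shW ushW (map map_edge A)) (map map_edge A)
          = map map_plaq (map (isolator shV ushV A) A).
  by rewrite -!map_comp; apply: eq_map => u; exact: isolator_map.
have -> : map (@ppos_of W) (map map_plaq S) = map map_plaq (map (@ppos_of V) S).
  by rewrite -!map_comp; apply: eq_map.
rewrite -map_cat (map_inj_uniq map_plaq_inj).
rewrite upos_map_edge -map_cons (map_inj_uniq map_edge_inj).
have once p :
    count (pred1 (map_edge t)) (lbd shW (map_plaq p)) = count (pred1 t) (lbd shV p).
  by rewrite lbd_map count_map; apply: eq_count => f /=; rewrite map_edge_eq.
rewrite size_map !all_map; congr [&& _, _, _, _ & _]; apply: eq_all => x.
  exact: (congr1 (eq_op^~ 1%N) (once x)).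
by rewrite /= isolator_map isolates_map.
Qed.

End Naturality.

(* A computable model of Z^4, on which the certificate is evaluated. *)
Definition cv := (int * int * int * int)%type.
Definition cv_coord (c : cv) (i : nat) : int :=
  match i with 0%N => c.1.1.1 | 1%N => c.1.1.2 | 2%N => c.1.2 | _ => c.2 end.
Definition cv_of (f : nat -> int) : cv := (f 0%N, f 1%N, f 2%N, f 3%N).
Definition cshift (c : cv) (j : 'I_4) : cv :=
  cv_of (fun i => cv_coord c i + (i == j)%:R).
Definition cunshift (c : cv) (j : 'I_4) : cv :=
  cv_of (fun i => cv_coord c i - (i == j)%:R).
Definition corigin : cv := (0, 0, 0, 0).

Lemma certificate_origin :
  all (fun j => certificate cshift cunshift (corigin, j, true)
                && certificate cshift cunshift (corigin, j, false)) dirs.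
Proof. by vm_compute. Qed.

Definition unshift (x : vertex) (j : 'I_4) : vertex := [ffun i => x i - (i == j)%:R].

Definition embed (x : vertex) (c : cv) : vertex := [ffun i => x i + cv_coord c i].

Lemma cv_coord_of f (i : 'I_4) : cv_coord (cv_of f) i = f i.
Proof. by case: i => [[|[|[|[|m]]]] Hm]. Qed.

Lemma embed_inj x : injective (embed x).
Proof.
move=> [[[a b] c] d] [[[a' b'] c'] d'] /ffunP E.
move: (E (@Ordinal 4 0 isT)) (E (@Ordinal 4 1 isT)).
move: (E (@Ordinal 4 2 isT)) (E (@Ordinal 4 3 isT)).
by rewrite !ffunE /= => /addrI -> /addrI -> /addrI -> /addrI ->.
Qed.

Lemma embed_shift x c j : embed x (cshift c j) = shift (embed x c) j.
Proof. by apply/ffunP => i; rewrite !ffunE cv_coord_of addrA. Qed.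

Lemma embed_unshift x c j : embed x (cunshift c j) = unshift (embed x c) j.
Proof. by apply/ffunP => i; rewrite !ffunE cv_coord_of addrA. Qed.

Lemma embed_origin x : embed x corigin = x.
Proof.
by apply/ffunP => i; rewrite ffunE; case: i => [[|[|[|[|m]]]] Hm]; rewrite /= addr0.
Qed.

Lemma certificate_vertex (e : edge) : certificate shift unshift e.
Proof.
case: e => [[x j] s].
have -> : (x, j, s) = map_edge (embed x) (corigin, j, s).
  by rewrite /map_edge /= embed_origin.
rewrite (certificate_map (@embed_inj x) (embed_shift x) (embed_unshift x)).
by have := allP certificate_origin j (mem_dirs j); case: s => /andP[].
Qed.

Definition pflip (p : plaq) : plaq := (p.1, ~~ p.2).

Lemma enegK : involutive eneg.
Proof. by case=> [[x j] []]. Qed.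

Lemma bd_pflip p : bd (pflip p) = map eneg (bd p).
Proof. by case: p => [[[x j1] j2] []]. Qed.

Lemma ppos_of_id (p : plaq) : ppos p -> ppos_of p = p.
Proof. by case: p => ? []. Qed.

Lemma upos_cases (a b : edge) : upos a = upos b -> a = b \/ a = eneg b.
Proof. by case: a b => [[x j] []] [[y k] []] [-> ->]; auto. Qed.

(* If [Q] meets (either orientation of) an edge [f] of a plaquette of hat-d e,
   then [Q] lies in hat-d f or its reversal does, so by the hypothesis on
   d hat-d d hat-d e all edges of [Q] lie in E_N. *)
Lemma line_box N e P f Q q :
  bhbh_sub N e -> in_hat e P -> f \in bd P -> pvalid Q -> q \in bd Q ->
  upos q = upos f -> {subset bd Q <= in_EN N}.
Proof.
move=> bh eP fP vQ qQ /upos_cases [qf | qf] f' f'Q.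
  by apply: (bh P f Q f') => //; rewrite /in_hat vQ -qf.
change (is_true (in_EN N (eneg f'))).
apply: (bh P f (pflip Q) (eneg f')) => //; last by rewrite bd_pflip map_f.
rewrite /in_hat bd_pflip; apply/andP; split; first exact: vQ.
by rewrite -[f]enegK -qf map_f.
Qed.

Lemma inB_boxv N x : inB N x -> x \in boxv N.
Proof.
move/forallP => xN; apply/mapP.
exists [ffun i => inord (absz (x i + N%:Z)) : 'I_(N + N).+1]; first by rewrite mem_enum.
apply/ffunP => i; rewrite !ffunE.
have /andP [lo hi] := xN i.
have x_ge0 : 0 <= x i + N%:Z by rewrite -lerBlDr sub0r.
rewrite inordK; first by rewrite gez0_abs // addrK.
rewrite ltnS -(@ler_nat int) natrD natz gez0_abs //.
by rewrite natz lerD2r.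
Qed.

Lemma posE_mem N f : in_EN N f -> upos f \in posE N.
Proof.
case: f => [[x j] s] fN; rewrite /posE mem_filter; apply/andP; split; first exact: fN.
apply/allpairsP; exists (x, j); split; rewrite /= ?mem_enum //.
by apply: inB_boxv; case/andP: fN.
Qed.

Lemma posP_mem N p : in_PN N p -> ppos_of p \in posP N.
Proof.
case: p => [[[x j1] j2] s] pN.
have {}pN : in_PN N (x, j1, j2, true) by case: s pN.
rewrite /posP mem_filter pN; apply/flatten_mapP; exists x.
  by apply: inB_boxv; move: pN => /andP [_ /andP [/andP [] ]].
by apply/allpairsP; exists (j1, j2); rewrite /= !mem_enum.
Qed.

Section Cochain.
Variables (n : nat) (sigma : vertex -> 'I_4 -> 'Z_n).

Lemma sig_eneg f : sig sigma (eneg f) = - sig sigma f.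
Proof. by case: f => [[x j] []]; rewrite /sig /= ?opprK. Qed.

Lemma sig_upos_eq0 f : (sig sigma (upos f) == 0) = (sig sigma f == 0).
Proof. by case: f => [[x j] []]; rewrite /sig /= ?oppr_eq0. Qed.

Lemma sig_line_eq0 a b : upos a = upos b -> (sig sigma a == 0) = (sig sigma b == 0).
Proof. by move=> ab; rewrite -sig_upos_eq0 ab sig_upos_eq0. Qed.

Lemma dsig_ppos_eq0 p : (dsig sigma (ppos_of p) == 0) = (dsig sigma p == 0).
Proof.
case: p => [[[x j1] j2] []] //.
change ((dsig sigma (x, j1, j2, true) == 0)
        = (dsig sigma (pflip (x, j1, j2, true)) == 0)).
rewrite /dsig bd_pflip big_map.
by rewrite (eq_bigr _ (fun f _ => sig_eneg f)) sumrN oppr_eq0.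
Qed.

End Cochain.

Section SupportBounds.
Variables (n N : nat) (g : 'Z_n) (sigma : vertex -> 'I_4 -> 'Z_n) (e : edge).
Hypotheses (g_neq0 : g != 0) (e_box : in_EN N e)
  (hat_eq : forall p, in_hat e p -> dsig sigma p - sig sigma e = g)
  (e_bhbh : bhbh_sub N e).

Local Notation S := (star shift unshift e).
Local Notation A := (petals shift unshift e).
Local Notation isolator_of := (isolator shift unshift (petals shift unshift e)).
Local Notation supp_edges := [seq u <- posE N | sig sigma u != 0].
Local Notation supp_plaqs := [seq p <- posP N | dsig sigma p != 0].

Let cert := certificateP (certificate_vertex e).

Lemma star_hat P : P \in S -> in_hat e P.
Proof. by rewrite mem_filter => /andP[]. Qed.

Lemma star_box P : P \in S -> {subset bd P <= in_EN N}.
Proof.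
move=> /star_hat eP; have /andP [vP eP'] := eP.
exact: (line_box e_bhbh eP eP' vP eP').
Qed.

Definition witness (P : plaq) : edge :=
  nth e (bd P) (find (fun f => (f != e) && (sig sigma f != 0)) (bd P)).

Lemma witness_spec P :
  P \in S -> [/\ witness P \in bd P, witness P != e & sig sigma (witness P) != 0].
Proof.
move=> PS; set live := fun f => (f != e) && (sig sigma f != 0).
suff live_P : has live (bd P).
  have /andP [ne nz] := nth_find e live_P.
  by split=> //; rewrite mem_nth // -has_find.
apply/negPn/negP => /hasPn dead.
have [_ once _ _ _] := cert.
have /andP [_ eP] := star_hat PS.
have dsigP : dsig sigma P = sig sigma e.
  rewrite /dsig; apply: (sum_single (p := pred1 e) eP (eqxx e) (once P PS)).
  move=> f fP fe; apply/eqP.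
  by move: (dead f fP); rewrite /live fe negbK.
by move: g_neq0; rewrite -(hat_eq (star_hat PS)) dsigP subrr eqxx.
Qed.

Definition picked_edges : seq edge := map (fun P => upos (witness P)) S.

Lemma picked_subseq : subseq picked_edges A.
Proof.
apply: subseq_pick => P PS; have [wP ne _] := witness_spec PS.
by apply: map_f; rewrite mem_filter ne.
Qed.

Lemma picked_uniq : uniq picked_edges.
Proof.
have [_ _ uA _ _] := cert.
by apply: subseq_uniq picked_subseq _; case/andP: uA.
Qed.

Lemma picked_size : size picked_edges = 6%N.
Proof. by have [six _ _ _ _] := cert; rewrite size_map. Qed.

Lemma picked_supp : {subset picked_edges <= supp_edges}.
Proof.
move=> _ /mapP [P PS ->]; have [wP _ nz] := witness_spec PS.
by rewrite mem_filter sig_upos_eq0 nz; apply: posE_mem; exact: (star_box PS wP).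
Qed.

Lemma card_sigma_ge6 : (6 <= card_supp_sigma N sigma)%N.
Proof. by rewrite -picked_size; apply: size_undup_ge picked_uniq picked_supp. Qed.

Lemma card_sigma_ge7 u :
  u \in supp_edges -> u \notin picked_edges -> (7 <= card_supp_sigma N sigma)%N.
Proof.
move=> u_supp u_new; have -> : 7%N = size (u :: picked_edges) by rewrite /= picked_size.
apply: size_undup_ge; first by rewrite /= u_new picked_uniq.
by move=> y; rewrite inE => /predU1P [-> // | /picked_supp].
Qed.

Section ExactSupport.
Hypothesis supp_picked : {subset supp_edges <= picked_edges}.

Lemma card_sigma_eq6 : card_supp_sigma N sigma = 6%N.
Proof.
apply/eqP; rewrite eqn_leq card_sigma_ge6 andbT -picked_size.
exact: size_undup_le.
Qed.

Lemma sig_vanish f : in_EN N f -> upos f \notin A -> sig sigma f = 0.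
Proof.
move=> fN fA; apply/eqP; rewrite -sig_upos_eq0; apply: contraNT fA => nz.
apply: (mem_subseq picked_subseq); apply: supp_picked.
by rewrite mem_filter nz posE_mem.
Qed.

(* Hence d sigma = g on the star, ... *)
Lemma star_supp P : P \in S -> ppos_of P \in supp_plaqs.
Proof.
move=> PS; have [_ _ uA _ _] := cert.
have e0 : sig sigma e = 0 by apply: (sig_vanish e_box); case/andP: uA.
have dsigP : dsig sigma P = g by rewrite -(hat_eq (star_hat PS)) e0 subr0.
rewrite mem_filter dsig_ppos_eq0 dsigP g_neq0 posP_mem // /in_PN.
by case/andP: (star_hat PS) => -> _; apply/allP; exact: star_box.
Qed.

(* ... and d sigma = +-sigma_{w(P)} <> 0 on the isolating plaquette of w(P). *)
Lemma isolator_supp P : P \in S -> isolator_of (upos (witness P)) \in supp_plaqs.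
Proof.
move=> PS; have [_ _ _ iso _] := cert.
have [wP _ w_nz] := witness_spec PS.
set u := upos (witness P); set Q := isolator_of u.
have /iso : u \in A by apply: (mem_subseq picked_subseq); apply: map_f.
case/and4P => vQ posQ /eqP onceQ /allP restQ.
have [q qQ /eqP qu] : exists2 q, q \in bd Q & upos q == u.
  by apply/hasP; rewrite has_count onceQ.
have Q_box := line_box e_bhbh (star_hat PS) wP vQ qQ qu.
have dsigQ : dsig sigma Q = sig sigma q.
  rewrite /dsig; apply: (sum_single (p := fun f => upos f == u) qQ _ onceQ) => [|f fQ fu].
    exact/eqP.
  by apply: sig_vanish; [exact: Q_box | move: (restQ f fQ); rewrite (negbTE fu)].
rewrite mem_filter dsigQ (sig_line_eq0 _ qu) w_nz /=.
have -> : Q = ppos_of Q by rewrite ppos_of_id.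
by apply: posP_mem; apply/andP; split; [exact: vQ | apply/allP; exact: Q_box].
Qed.

(* These twelve plaquettes are distinct. *)
Lemma card_dsigma_ge12 : (12 <= card_supp_dsigma N sigma)%N.
Proof.
have [six _ _ _ uQ] := cert.
pose found := map (@ppos_of _) S ++ map isolator_of picked_edges.
have -> : 12%N = size found by rewrite size_cat !size_map six.
apply: size_undup_ge.
  by apply: subseq_uniq uQ; rewrite cat_subseq // map_subseq // picked_subseq.
move=> p; rewrite mem_cat => /orP [] /mapP [x xS ->]; first exact: star_supp.
by case/mapP: xS => P PS ->; exact: isolator_supp.
Qed.

End ExactSupport.
End SupportBounds.

Theorem mainTheorem6 (n N : nat) (hn : (1 < n)%N) (g : 'Z_n)
    (sigma : vertex -> 'I_4 -> 'Z_n) (e : edge) :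
  g != 0 ->
  in_EN N e ->
  (forall p : plaq, in_hat e p -> dsig sigma p - sig sigma e = g) ->
  bhbh_sub N e ->
  (7 <= card_supp_sigma N sigma)%N \/
  (card_supp_sigma N sigma = 6%N /\ (12 <= card_supp_dsigma N sigma)%N).
Proof.
move=> g_neq0 e_box hat_eq e_bhbh.
have [/allP supp_eq | /allPn [u u_supp u_new]] :=
  boolP (all (mem (picked_edges sigma e)) [seq u <- posE N | sig sigma u != 0]).
  right; split; first exact: (card_sigma_eq6 g_neq0 hat_eq e_bhbh supp_eq).
  exact: (card_dsigma_ge12 g_neq0 e_box hat_eq e_bhbh supp_eq).
by left; apply: (card_sigma_ge7 g_neq0 hat_eq e_bhbh u_supp u_new).
Qed.
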